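(* Let $G=\mathrm{Cay}(\Gamma,S)$ be a Cayley graph, let $h\in S$ be an involution such that $H:=\langle h\rangle$ is normal in $\Gamma$, and let $r\ge2$. If $\{\mathbb{I},h\}$ is an $(r+2)$-local $2$-separator of $G$, then the vertex $\{\mathbb{I},h\}$ is an $r$-local cutvertex of $G/h$.
   Context: Generating sets exclude the identity $\mathbb{I}$ and are closed under inverses; $\mathrm{Cay}(\Gamma,S)$ is the simple graph on $\Gamma$ with edges $\{g,gs\}$. $G/h$ is the simple graph obtained from $G$ by contracting all edges labelled $h$ (i.e. the edges $\{g,gh\}$) and identifying parallel edges: its vertices are the cosets $gH=\{g,gh\}$, and two distinct cosets are adjacent iff some element of one is adjacent in $G$ to some element of the other. Ball $B_r(v)$: subgraph of all vertices and edges on closed walks of length $\le r$ through $v$; $v$ is an $r$-local cutvertex if $B_r(v)-v$ is disconnected. For $X=\{v_0,v_1\}$, $N(X)$ is the set of vertices outside $X$ adjacent to $X$; the connectivity graph $C_r(v_0,v_1)$ has vertex set $N(X)$, $a,b$ adjacent if for some $i$ they lie in the same component of $B_r(v_i)-v_0-v_1$; $X$ is an $r$-local $2$-separator if $C_r(v_0,v_1)$ is disconnected and $d_G(v_0,v_1)\le r/2$. *)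

From Stdlib Require Import Relations.
From Stdlib Require List.
From HB Require Import structures.
From mathcomp Require Import ssreflect ssrfun ssrbool eqtype ssrnat seq choice monoid.

Set Implicit Arguments.
Unset Strict Implicit.
Unset Printing Implicit Defensive.

Local Open Scope group_scope.

Section Graphs.
Variable V : Type.

(* [is_walk E x p] : x :: p is a walk for the relation E
   (consecutive vertices are E-related); its length is [size p] and
   it ends at [last x p]. *)
Fixpoint is_walk (E : V -> V -> Prop) (x : V) (p : seq V) : Prop :=
  match p with
  | [::] => True
  | y :: q => E x y /\ is_walk E y q
  end.

Fixpoint walk_edge (x : V) (p : seq V) (a b : V) : Prop :=
  match p with
  | [::] => False
  | y :: q => (x = a /\ y = b) \/ (x = b /\ y = a) \/ walk_edge y q a b
  end.

Variable adj : V -> V -> Prop.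

Definition closed_walk_at (r : nat) (v : V) (p : seq V) : Prop :=
  is_walk adj v p /\ last v p = v /\ size p <= r.

Definition ball_vertex (r : nat) (v u : V) : Prop :=
  exists p, closed_walk_at r v p /\ List.In u (v :: p).

Definition ball_edge (r : nat) (v a b : V) : Prop :=
  exists p, closed_walk_at r v p /\ walk_edge v p a b.

Definition conn_in (P : V -> Prop) (E : V -> V -> Prop) (a b : V) : Prop :=
  exists p, is_walk E a p /\ last a p = b /\ List.Forall P (a :: p).

Definition ball_minus (r : nat) (v : V) (Z : V -> Prop) (u : V) : Prop :=
  ball_vertex r v u /\ ~ Z u.

Definition same_comp_ball_minus (r : nat) (v : V) (Z : V -> Prop) (a b : V)
  : Prop :=
  ball_minus r v Z a /\ ball_minus r v Z b /\
  conn_in (ball_minus r v Z) (ball_edge r v) a b.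

Definition local_cutvertex (r : nat) (v : V) : Prop :=
  exists a b, ball_minus r v (fun u => u = v) a /\
              ball_minus r v (fun u => u = v) b /\
              ~ conn_in (ball_minus r v (fun u => u = v)) (ball_edge r v) a b.

Definition nbhd2 (v0 v1 u : V) : Prop :=
  u <> v0 /\ u <> v1 /\ (adj v0 u \/ adj v1 u).

Definition conn_graph_adj (r : nat) (v0 v1 a b : V) : Prop :=
  let X := fun u => u = v0 \/ u = v1 in
  nbhd2 v0 v1 a /\ nbhd2 v0 v1 b /\
  (same_comp_ball_minus r v0 X a b \/ same_comp_ball_minus r v1 X a b).

Definition dist_le_half (r : nat) (v0 v1 : V) : Prop :=
  exists p, is_walk adj v0 p /\ last v0 p = v1 /\ 2 * size p <= r.

Definition local_2separator (r : nat) (v0 v1 : V) : Prop :=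
  v0 <> v1 /\
  (exists a b, nbhd2 v0 v1 a /\ nbhd2 v0 v1 b /\
               ~ clos_refl_trans V (conn_graph_adj r v0 v1) a b) /\
  dist_le_half r v0 v1.

End Graphs.

Section Cayley.
Variable G : groupType.

(* S generates G (as a monoid; S is assumed closed under inverses) *)
Definition generates (S : G -> Prop) : Prop :=
  forall g : G, exists l : seq G, List.Forall S l /\ g = foldr mul 1 l.

Definition generating_set (S : G -> Prop) : Prop :=
  ~ S 1 /\ (forall s, S s -> S s^-1) /\ generates S.

Definition cay_adj (S : G -> Prop) (g g' : G) : Prop :=
  exists s, S s /\ g' = g * s.

Definition hcoset (h g : G) : G -> Prop := fun x => x = g \/ x = g * h.

Definition qvert (h : G) : Type := {A : G -> Prop | exists g, A = hcoset h g}.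

Definition qadj (S : G -> Prop) (h : G) (A B : qvert h) : Prop :=
  A <> B /\ exists a b, sval A a /\ sval B b /\ cay_adj S a b.

Definition qbase (h : G) : qvert h := exist _ (hcoset h 1) (ex_intro _ 1 erefl).

End Cayley.

(* Since {1, h} is normal and h <> 1, h is central, so right multiplication
   by h is an automorphism of Cay(G, S) and every walk in G/h lifts to a walk
   in G from any element of its initial coset.  A closed walk of length <= r
   at {1, h} lifts to a walk from 1 ending in {1, h}; closing it with the edge
   h -- 1, and translating it by h, shows that every edge of B_r({1, h}) lifts,
   from either end point of its first coset, to an edge of B_(r+2)(1).  Hence a
   path between two cosets aH, bH in B_r({1, h}) - {1, h} lifts to a path from
   a to b or bh in B_(r+2)(1) - {1, h}.  As the 4-cycle 1, s, sh, h makes every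
   neighbour c of {1, h} adjacent to ch in C_(r+2)(1, h), the cosets of two
   neighbours in different components of C_(r+2)(1, h) are separated in
   B_r({1, h}) - {1, h}. *)
From mathcomp Require Import ssreflect ssrfun ssrbool eqtype ssrnat seq choice monoid.
From Stdlib Require Import Relations ProofIrrelevance FunctionalExtensionality PropExtensionality.
From Stdlib Require List.

Set Implicit Arguments.
Unset Strict Implicit.
Unset Printing Implicit Defensive.

Local Open Scope group_scope.

Section Walks.
Variable V : Type.

Lemma In_last (x : V) p : List.In (last x p) (x :: p).
Proof. by elim: p x => [|y p IH] x /=; [left | right; apply: IH]. Qed.

Lemma is_walk_cat E (x : V) s1 s2 :
  is_walk E x (s1 ++ s2) <-> is_walk E x s1 /\ is_walk E (last x s1) s2.
Proof. by elim: s1 x => [|y s IH] x /=; [tauto | rewrite IH; tauto]. Qed.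

Lemma is_walk_map (W : Type) (E : V -> V -> Prop) (E' : W -> W -> Prop) f x p :
  (forall u v, E u v -> E' (f u) (f v)) -> is_walk E x p -> is_walk E' (f x) (map f p).
Proof. by move=> fE; elim: p x => [|y p IH] x //= [/fE ? /IH]. Qed.

Lemma walk_edge_sym (x : V) p a b : walk_edge x p a b -> walk_edge x p b a.
Proof. by elim: p x => [|y p IH] x //= [[-> ->]|[[-> ->]|/IH]]; auto. Qed.

Lemma walk_edge_mem (x : V) p a b :
  walk_edge x p a b -> List.In a (x :: p) /\ List.In b (x :: p).
Proof.
elim: p x => [|y p IH] x //= [[-> ->]|[[-> ->]|/IH [? ?]]]; first by auto.
- by split; [right; left | left].
- by split; right.
Qed.

Lemma walk_edge_catl (x : V) s1 s2 a b :
  walk_edge x s1 a b -> walk_edge x (s1 ++ s2) a b.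
Proof. by elim: s1 x => [|y s IH] x //= [|[|/IH]]; auto. Qed.

Lemma walk_edge_map (W : Type) (f : V -> W) x p a b :
  walk_edge x p a b -> walk_edge (f x) (map f p) (f a) (f b).
Proof. by elim: p x => [|y p IH] x //= [[-> ->]|[[-> ->]|/IH]]; auto. Qed.

Lemma ball_edge_vertex adj r (v a b : V) :
  ball_edge adj r v a b -> ball_vertex adj r v a /\ ball_vertex adj r v b.
Proof. by move=> [p [cw /walk_edge_mem [? ?]]]; split; exists p. Qed.

Lemma conn_in_ends P E (a b : V) : conn_in P E a b -> P a /\ P b.
Proof.
move=> [p [_ [<- Pp]]]; move/List.Forall_forall: Pp => Pp.
by split; apply: Pp; [left | apply: In_last].
Qed.

Lemma conn_in_refl P E (a : V) : P a -> conn_in P E a a.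
Proof. by move=> Pa; exists [::]; do 2!split => //; constructor. Qed.

Lemma conn_in_cons P E (a b c : V) :
  P a -> E a b -> conn_in P E b c -> conn_in P E a c.
Proof. by move=> Pa Eab [p [wp [lp Pp]]]; exists (b :: p); do 2!split => //; constructor. Qed.

Lemma conn_graph_adj_of_conn_in adj k (v0 v1 a b : V) :
  nbhd2 adj v0 v1 a -> nbhd2 adj v0 v1 b ->
  conn_in (ball_minus adj k v0 (fun u => u = v0 \/ u = v1)) (ball_edge adj k v0) a b ->
  conn_graph_adj adj k v0 v1 a b.
Proof. by move=> Na Nb ab; have [Ya Yb] := conn_in_ends ab; do 2!split => //; left. Qed.

End Walks.

Lemma central_of_normal_pair (G : groupType) (h : G) :
  h <> 1 -> (forall g : G, g * h * g^-1 = 1 \/ g * h * g^-1 = h) ->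
  forall g, commute g h.
Proof.
move=> h_neq1 hN g; case: (hN g) => /(congr1 (fun z => z * g)); rewrite mulgVK //.
by rewrite mul1g => /(congr1 (mul g^-1)); rewrite mulKg mulVg.
Qed.

Section CayleyQuotient.
Variables (G : groupType) (S : G -> Prop) (h : G).

Local Notation cay := (cay_adj S).
Local Notation qG := (@qadj G S h).
Local Notation pair1h := (fun u : G => u = 1 \/ u = h).

Definition qcoset (g : G) : qvert h := exist _ (hcoset h g) (ex_intro _ g erefl).

Lemma cay_adj_mull c x y : cay x y -> cay (c * x) (c * y).
Proof. by move=> [s [Ss ->]]; exists s; rewrite mulgA. Qed.

Hypothesis S_inv : forall s, S s -> S s^-1.

Lemma cay_adj_sym a b : cay a b -> cay b a.
Proof. by move=> [s [Ss ->]]; exists s^-1; split; [apply: S_inv | rewrite mulgK]. Qed.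

Hypotheses (Sh : S h) (hh : h * h = 1) (h_central : forall g, commute g h).

Lemma mulgKh x : x * h * h = x.
Proof. by rewrite -mulgA hh mulg1. Qed.

Lemma cay_adj_mulh x y : cay x y -> cay (x * h) (y * h).
Proof. by move=> [s [Ss ->]]; exists s; rewrite -!mulgA h_central. Qed.

Lemma ball_edge_of_walk_to_pair k w a b :
  is_walk cay 1 w -> pair1h (last 1 w) -> (size w <= k)%N ->
  walk_edge 1 w a b -> ball_edge cay k.+1 1 a b.
Proof.
move=> ww [wl|wl] wk wab.
  by exists w; do !split => //; apply: leqW.
exists (w ++ [:: 1]); split; last exact: walk_edge_catl.
split; first by apply/is_walk_cat; rewrite wl; do 2!split => //; exists h.
by rewrite last_cat wl size_cat addn1.
Qed.

Lemma qvert_ext (X Y : qvert h) : (forall x, sval X x <-> sval Y x) -> X = Y.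
Proof.
case: X Y => [P HP] [Q HQ] /= PQ.
have ePQ : P = Q by apply: functional_extensionality => x; apply: propositional_extensionality.
by subst Q; congr exist; apply: proof_irrelevance.
Qed.

Lemma qvert_mem2 (X : qvert h) x y : sval X x -> sval X y -> y = x \/ y = x * h.
Proof. by case: X => P [c eP] /=; rewrite eP => -[->|->] [->|->]; rewrite ?mulgKh; auto. Qed.

Lemma qvert_mulh (X : qvert h) x : sval X x -> sval X (x * h).
Proof. by case: X => P [c eP] /=; rewrite eP => -[->|->]; rewrite /hcoset ?mulgKh; auto. Qed.

Lemma qvert_base (X : qvert h) x : sval X x -> pair1h x -> X = qbase h.
Proof.
move=> Xx x1h; apply: qvert_ext => y /=; rewrite /hcoset mul1g; split.
  by case/(qvert_mem2 Xx) => ->; case: x1h => ->; rewrite ?mul1g ?hh; auto.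
have Xxh := qvert_mulh Xx.
by case: x1h => ex; subst x; move: Xxh; rewrite ?mul1g ?hh => Xxh [->|->].
Qed.

Lemma qadj_lift A B x : qG A B -> sval A x -> exists y, sval B y /\ cay x y.
Proof.
move=> [_ [a [b [Aa [Bb ab]]]]] Ax.
case: (qvert_mem2 Aa Ax) => ->; first by exists b.
by exists (b * h); split; [apply: qvert_mulh | apply: cay_adj_mulh].
Qed.

Lemma qwalk_lift p (X : qvert h) x :
  is_walk qG X p -> sval X x ->
  exists q, [/\ is_walk cay x q, size q = size p, sval (last X p) (last x q) &
    forall A B, walk_edge X p A B ->
      exists u v, [/\ sval A u, sval B v & walk_edge x q u v]].
Proof.
elim: p X x => [|Y p IH] X x /=; first by exists [::].
move=> [XY wp] Xx; have [y [Yy xy]] := qadj_lift XY Xx.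
have [q [wq sq lq eq]] := IH _ _ wp Yy.
exists (y :: q); split => //=; first by rewrite sq.
move=> A B [[<- <-]|[[<- <-]|/eq [u [v [Au Bv uv]]]]].
- by exists x, y; split => //; left.
- by exists y, x; split => //; right; left.
- by exists u, v; split => //; right; right.
Qed.

Lemma qball_edge_lift r A B x :
  ball_edge qG r (qbase h) A B -> sval A x ->
  exists y, sval B y /\ ball_edge cay r.+2 1 x y.
Proof.
move=> [p [[wp [lp sp]] AB]] Ax.
have [q [wq sq lq eq]] := qwalk_lift wp (or_introl erefl : sval (qbase h) 1).
move: lq; rewrite lp /= /hcoset mul1g => lq.
have [u [v [Au Bv uv]]] := eq _ _ AB.
case: (qvert_mem2 Au Ax) => ->.
  exists v; split => //; apply: (ball_edge_of_walk_to_pair wq lq) => //.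
  by rewrite sq leqW.
(* translate the lifted walk by h, reaching it from 1 through the edge 1 -- h *)
exists (v * h); split; first exact: qvert_mulh.
rewrite !h_central; apply: (@ball_edge_of_walk_to_pair _ (h :: map (mul h) q)).
- split; first by exists h; rewrite mul1g.
  by rewrite -{1}(mulg1 h); apply: is_walk_map wq; apply: cay_adj_mull.
- have := last_map (mul h) q 1; rewrite mulg1 /= => ->.
  by case: lq => ->; rewrite ?mulg1 ?hh; auto.
- by rewrite /= size_map sq.
- by right; right; rewrite -{1}(mulg1 h); apply: walk_edge_map.
Qed.

Lemma qball_path_lift r p (A B : qvert h) x :
  is_walk (ball_edge qG r (qbase h)) A p -> last A p = B ->
  List.Forall (ball_minus qG r (qbase h) (fun U => U = qbase h)) (A :: p) ->
  sval A x -> ball_minus cay r.+2 1 pair1h x ->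
  exists y, sval B y /\ conn_in (ball_minus cay r.+2 1 pair1h) (ball_edge cay r.+2 1) x y.
Proof.
elim: p A x => [|A' p IH] A x /=.
  by move=> _ <- _ Ax Yx; exists x; split => //; apply: conn_in_refl.
move=> [AA' wp] lp Pp Ax Yx.
move/List.Forall_cons_iff: Pp => [_ Pp]; have [_ A'_base] := List.Forall_inv Pp.
have [x' [A'x' xx']] := qball_edge_lift AA' Ax.
have Yx' : ball_minus cay r.+2 1 pair1h x'.
  by split; [case: (ball_edge_vertex xx') | move/(qvert_base A'x')].
have [y [By cy]] := IH _ _ wp lp Pp A'x' Yx'.
by exists y; split => //; apply: conn_in_cons cy.
Qed.

Lemma nbhd2_mulh a : nbhd2 cay 1 h a -> nbhd2 cay 1 h (a * h).
Proof.
move=> [a1 [ah a_adj]]; split; [|split].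
- by move=> /(congr1 (fun z => z * h)); rewrite mulgKh mul1g.
- by move=> /(congr1 (fun z => z * h)); rewrite mulgKh hh.
- case: a_adj => -[s [Ss ->]]; rewrite ?mul1g.
  + by right; exists s; rewrite h_central.
  + by left; exists s; rewrite h_central mulgA hh !mul1g.
Qed.

(* a neighbour s of 1 lies on the 4-cycle 1, s, s h, h, 1 *)
Lemma nbhd2_ball_edge_mulh k a :
  (4 <= k)%N -> nbhd2 cay 1 h a -> ball_edge cay k 1 a (a * h).
Proof.
move=> k4.
suff edge_from_1 b : cay 1 b -> ball_edge cay k 1 b (b * h).
  move=> [_ [_ [/edge_from_1 // | [s [Ss ea]]]]].
  have ah_adj : cay 1 (a * h) by exists s; rewrite mul1g ea h_central mulgA hh mul1g.
  have [p [cp e]] := edge_from_1 _ ah_adj.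
  by exists p; split => //; rewrite -{1}(mulgKh a); apply: walk_edge_sym.
move=> [s [Ss]]; rewrite mul1g => ->.
exists [:: s; s * h; h; 1]; split; last by right; right; left.
split; last by split.
do !split; [by exists s; rewrite mul1g | by exists h | | by exists h].
by exists s^-1; split; [apply: S_inv | rewrite h_central mulgK].
Qed.

Lemma nbhd2_ball_minus k a :
  (4 <= k)%N -> nbhd2 cay 1 h a -> ball_minus cay k 1 pair1h a.
Proof.
move=> k4 Na; split; first exact: (ball_edge_vertex (nbhd2_ball_edge_mulh k4 Na)).1.
by case: Na => a1 [ah _] [].
Qed.

Lemma conn_graph_adj_mulh k a :
  (4 <= k)%N -> nbhd2 cay 1 h a ->
  conn_graph_adj cay k 1 h a (a * h).
Proof.
move=> k4 Na; apply: conn_graph_adj_of_conn_in (nbhd2_mulh Na) _ => //.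
apply: conn_in_cons (nbhd2_ball_edge_mulh k4 Na) (conn_in_refl _ _).
  exact: nbhd2_ball_minus.
exact: nbhd2_ball_minus (nbhd2_mulh Na).
Qed.

Lemma nbhd2_qball r c :
  (2 <= r)%N -> nbhd2 cay 1 h c ->
  ball_minus qG r (qbase h) (fun U => U = qbase h) (qcoset c).
Proof.
move=> r2 [c1 [ch c_adj]].
have C_base : qcoset c <> qbase h.
  move=> ec; have : sval (qbase h) c by rewrite -ec; left.
  by rewrite /= /hcoset mul1g => -[].
have [x [Xx xc]] : exists x, sval (qbase h) x /\ cay x c.
  by case: c_adj => ?; [exists 1; split; [left|] | exists h; split; [right; rewrite mul1g|]].
split => //; exists [:: qcoset c; qbase h]; split; last by right; left.
split; last by split.
split; first by split; [move/esym | exists x, c; split; [|split => //; left]].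
split => //; split => //; exists c, x; split; first by left.
by split; [| apply: cay_adj_sym].
Qed.

End CayleyQuotient.

Theorem lemma6p5 (G : groupType) (S : G -> Prop) (h : G) (r : nat) :
  generating_set S ->
  S h -> h * h = 1 ->
  (forall g : G, g * h * g^-1 = 1 \/ g * h * g^-1 = h) ->
  (2 <= r)%N ->
  local_2separator (cay_adj S) (r + 2)%N 1 h ->
  local_cutvertex (@qadj G S h) r (qbase h).
Proof.
move=> [S1 [S_inv _]] Sh hh hN r2 [_ [[a [b [Na [Nb C_ab]]]] _]].
have h_central : forall g, commute g h.
  by apply: central_of_normal_pair hN => h1; apply: S1; rewrite -h1.
have k4 : (4 <= r.+2)%N by [].
rewrite addn2 in C_ab.
exists (qcoset h a), (qcoset h b); split; first exact: nbhd2_qball.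
split; first exact: nbhd2_qball.
move=> [p [wp [lp Pp]]]; apply: C_ab.
have [y [By ay]] := qball_path_lift Sh hh h_central wp lp Pp (or_introl erefl)
  (nbhd2_ball_minus S_inv Sh hh h_central k4 Na).
have Bb : sval (qcoset h b) b by left.
case: (qvert_mem2 hh Bb By) => ey; subst y.
  exact/rt_step/conn_graph_adj_of_conn_in.
have Nbh := nbhd2_mulh hh h_central Nb.
apply: rt_trans (rt_step _ _ _ _ (conn_graph_adj_of_conn_in Na Nbh ay)) (rt_step _ _ _ _ _).
by rewrite -{2}(mulgKh hh b); apply: conn_graph_adj_mulh.
Qed.
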